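(* Let $n\ge1$ and $Q\in\mathcal{Q}_n$. Then $Q$ is meet-irreducible in $(\mathcal{Q}_n,\le)$ if and only if $Q\in\mathcal{P}_n$ and $Q=Q(w)$ where $w\in S_n$ is of the form $w=w(i_1,i_2,i_3,i_4)$ for some integers $i_1,i_4\ge0$, $i_2,i_3\ge1$ with $i_1+i_2+i_3+i_4=n$. In particular, no proper quasi-copula (element of $\mathcal{Q}_n\setminus\mathcal{P}_n$) is meet-irreducible in $\mathcal{Q}_n$.
   Context: Fix $n\ge1$, $L_n=\{0,\dots,n\}$. $\mathcal{Q}_n$ is the set of irreducible discrete quasi-copulas: maps $Q:L_n\times L_n\to L_n$ (onto) with $Q(i,0)=Q(0,i)=0$, $Q(i,n)=Q(n,i)=i$, non-decreasing in each argument, and $Q(i,j)+Q(i',j')\ge Q(i,j')+Q(i',j)$ whenever $i\le i'$, $j\le j'$ and one of $i,i',j,j'$ lies in $\{0,n\}$. $\mathcal{P}_n\subseteq\mathcal{Q}_n$ is the subset of those satisfying this inequality for all $i\le i'$, $j\le j'$ (irreducible discrete copulas). Order: $P\le Q$ iff $P(i,j)\le Q(i,j)$ for all $i,j$. For $w\in S_n$, $Q(w)(r,s)=|\{i\le r: w(i)\le s\}|$ (and $0$ if $r=0$ or $s=0$); every element of $\mathcal{P}_n$ is $Q(w)$ for a unique $w$. An element $z$ of a finite poset $P$ is meet-irreducible if $z$ is not the maximum of $P$ and $z=x\wedge y$ implies $z=x$ or $z=y$. For integers $i_1,i_4\ge0$, $i_2,i_3\ge1$ with $i_1+i_2+i_3+i_4=n$,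 $w(i_1,i_2,i_3,i_4)\in S_n$ is defined by $w(i)=i$ for $1\le i\le i_1$, $w(i)=i+i_3$ for $i_1+1\le i\le i_1+i_2$, $w(i)=i-i_2$ for $i_1+i_2+1\le i\le i_1+i_2+i_3$, and $w(i)=i$ for $i_1+i_2+i_3+1\le i\le n$. *)

From mathcomp Require Import all_boot all_fingroup.
Set Implicit Arguments. Unset Strict Implicit. Unset Printing Implicit Defensive.

(* A map L_n x L_n -> L_n, L_n = {0..n}, represented as a finite function on
   ordinals 'I_n.+1 with values in nat (the codomain condition Q <= n is imposed
   in [quasi_copula]). *)
Definition qfun (n : nat) := {ffun 'I_n.+1 * 'I_n.+1 -> nat}.

(* value at natural indices i, j (meaningful for i, j <= n) *)
Definition qv (n : nat) (Q : qfun n) (i j : nat) : nat := Q (inord i, inord j).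

Definition in_bd (n k : nat) : bool := (k == 0) || (k == n).

Definition quasi_copula (n : nat) (Q : qfun n) : Prop :=
  [/\ (forall i j, i <= n -> j <= n -> qv Q i j <= n),
      (forall k, k <= n -> exists i j, [/\ i <= n, j <= n & qv Q i j = k]),
      (forall i, i <= n -> qv Q i 0 = 0 /\ qv Q 0 i = 0),
      (forall i, i <= n -> qv Q i n = i /\ qv Q n i = i) &
   [/\ (forall i i' j, i <= i' -> i' <= n -> j <= n -> qv Q i j <= qv Q i' j),
      (forall i j j', j <= j' -> j' <= n -> i <= n -> qv Q i j <= qv Q i j') &
      (forall i i' j j', i <= i' -> i' <= n -> j <= j' -> j' <= n ->
         [|| in_bd n i, in_bd n i', in_bd n j | in_bd n j'] ->
         qv Q i j' + qv Q i' j <= qv Q i j + qv Q i' j')]].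

Definition copula (n : nat) (Q : qfun n) : Prop :=
  quasi_copula Q /\
  (forall i i' j j', i <= i' -> i' <= n -> j <= j' -> j' <= n ->
         qv Q i j' + qv Q i' j <= qv Q i j + qv Q i' j').

Definition qle (n : nat) (P Q : qfun n) : Prop :=
  forall i j : 'I_n.+1, P (i, j) <= Q (i, j).

Definition is_meet (n : nat) (z x y : qfun n) : Prop :=
  [/\ quasi_copula z, qle z x, qle z y &
      forall u, quasi_copula u -> qle u x -> qle u y -> qle u z].

Definition meet_irreducible (n : nat) (z : qfun n) : Prop :=
  [/\ quasi_copula z,
      ~ (forall u, quasi_copula u -> qle u z) &
      forall x y, quasi_copula x -> quasi_copula y -> is_meet z x y ->
        z = x \/ z = y].

(* Q(w) for w in S_n; the ordinal i : 'I_n stands for the integer i+1, so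
   Q(w)(r,s) = |{ i in 1..n : i <= r, w(i) <= s }| *)
Definition Qw (n : nat) (w : 'S_n) : qfun n :=
  [ffun p : 'I_n.+1 * 'I_n.+1 =>
     #|[set i : 'I_n | (i < p.1) && (w i < p.2)]| ].

(* w(i1,i2,i3,i4) as a function on 1-based integers *)
Definition wfun (i1 i2 i3 i4 : nat) (i : nat) : nat :=
  if i <= i1 then i
  else if i <= i1 + i2 then i + i3
  else if i <= i1 + i2 + i3 then i - i2
  else i.

From mathcomp Require Import all_boot all_fingroup.
From mathcomp Require Import zify.
Set Implicit Arguments. Unset Strict Implicit. Unset Printing Implicit Defensive.

(* 1. Q_n is characterised by boundary conditions together with "unit steps":
      Q increases by 0 or 1 when either argument increases by 1.  This form is
      stable under pointwise minimum, so the meet of two quasi-copulas is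
      their pointwise minimum.
   2. For a, b <= n and v the "elementary" quasi-copula
        M_{a,b,v}(i,j) = min(i, j, v + (i-a)^+ + (j-b)^+)
      is the largest element of Q_n whose value at (a,b) is at most v.  Hence
      every Q is the minimum of the M_{a,b,Q(a,b)} over all points (a,b),
      and M_{n,0,0}(i,j) = min(i,j) is the top element.
   3. A meet-irreducible Q therefore equals some M_{a,b,v}, with v < min(a,b)
      since Q is not the top; conversely each such M_{a,b,v} is
      meet-irreducible: if min(x,y) <= M_{a,b,v}, then x or y is <= v at (a,b),
      hence below M_{a,b,v} by maximality.
   4. Finally M_{i1+i2, i1+i3, i1} = Q(w(i1,i2,i3,i4)) by counting, and every
      Q(w) is 2-increasing, i.e. a copula. *)

Lemma unit_steps (f : nat -> nat) (m : nat) :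
  (forall k, k < m -> f k <= f k.+1 <= (f k).+1) ->
  forall i i', i <= i' -> i' <= m -> f i <= f i' <= f i + (i' - i).
Proof.
move=> step i i' hii'; have [d ->] : exists d, i' = i + d.
  by exists (i' - i); rewrite subnKC.
rewrite addKn; elim: d => [|d IH] hd; first by rewrite !addn0 leqnn.
rewrite addnS in hd *; have := IH (ltnW hd); have := step _ hd; lia.
Qed.

Section QuasiCopulas.
Variable n : nat.
Implicit Types (P Q u x y : qfun n).

Definition unit_step_form Q : Prop :=
 [/\ (forall i, i <= n -> qv Q i 0 = 0 /\ qv Q 0 i = 0),
     (forall i, i <= n -> qv Q i n = i /\ qv Q n i = i),
     (forall i j, i < n -> j <= n -> qv Q i j <= qv Q i.+1 j <= (qv Q i j).+1) &
     (forall i j, j < n -> i <= n -> qv Q i j <= qv Q i j.+1 <= (qv Q i j).+1)].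

Lemma unit_step_lipschitz Q : unit_step_form Q ->
  (forall i i' j, i <= i' -> i' <= n -> j <= n ->
      qv Q i j <= qv Q i' j <= qv Q i j + (i' - i)) /\
  (forall i j j', j <= j' -> j' <= n -> i <= n ->
      qv Q i j <= qv Q i j' <= qv Q i j + (j' - j)).
Proof.
case=> _ _ Hi Hj; split.
- move=> i i' j hi hi' hj; apply: (unit_steps (f := fun k => qv Q k j)) hi hi'.
  by move=> k hk; apply: Hi.
- move=> i j j' hj hj' hi; apply: (unit_steps (f := qv Q i)) hj hj'.
  by move=> k hk; apply: Hj.
Qed.

Lemma unit_step_upper Q i j : unit_step_form Q -> i <= n -> j <= n ->
  qv Q i j <= minn i j.
Proof.
move=> hq hi hj; have [Gi Gj] := unit_step_lipschitz hq; case: hq => _ Hn _ _.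
have := Gi i n j hi (leqnn _) hj; have := Gj i j n hj (leqnn _) hi.
have := Hn i hi; have := Hn j hj; lia.
Qed.

Lemma unit_step_lower Q a b : unit_step_form Q -> a <= n -> b <= n ->
  a + b <= qv Q a b + n.
Proof.
move=> hq ha hb; have [_ Gj] := unit_step_lipschitz hq; case: hq => _ Hn _ _.
have := Gj a b n hb (leqnn _) ha; have := Hn a ha; lia.
Qed.

Lemma unit_step_boundary_2inc Q : unit_step_form Q ->
  forall i i' j j', i <= i' -> i' <= n -> j <= j' -> j' <= n ->
    [|| in_bd n i, in_bd n i', in_bd n j | in_bd n j'] ->
    qv Q i j' + qv Q i' j <= qv Q i j + qv Q i' j'.
Proof.
move=> hq i i' j j' hi hi' hj hj' hb.
have [Gi Gj] := unit_step_lipschitz hq; case: hq => H0 Hn _ _.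
have hin : i <= n by apply: leq_trans hi hi'.
have hjn : j <= n by apply: leq_trans hj hj'.
have := Gi i i' j hi hi' hjn; have := Gi i i' j' hi hi' hj'.
have := Gj i j j' hj hj' hin; have := Gj i' j j' hj hj' hi'.
case/or4P: hb => /orP [] /eqP E.
- rewrite E (proj2 (H0 _ hj')) (proj2 (H0 _ hjn)); lia.
- have E' : i' = n by lia.
  rewrite E E' (proj2 (Hn _ hj')) (proj2 (Hn _ hjn)); lia.
- have E' : i = 0 by lia.
  rewrite E E' (proj2 (H0 _ hj')) (proj2 (H0 _ hjn)); lia.
- rewrite E (proj2 (Hn _ hj')) (proj2 (Hn _ hjn)); lia.
- rewrite E (proj1 (H0 _ hin)) (proj1 (H0 _ hi')); lia.
- have E' : j' = n by lia.
  rewrite E E' (proj1 (Hn _ hin)) (proj1 (Hn _ hi')); lia.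
- have E' : j = 0 by lia.
  rewrite E E' (proj1 (H0 _ hin)) (proj1 (H0 _ hi')); lia.
- rewrite E (proj1 (Hn _ hin)) (proj1 (Hn _ hi')); lia.
Qed.

Lemma quasi_copulaP Q : quasi_copula Q <-> unit_step_form Q.
Proof.
split.
- case=> _ _ H0 Hn [Mi Mj I]; split => //.
  + move=> i j hi hj; have := Mi i i.+1 j (leqnSn _) hi hj.
    have := I i i.+1 j n (leqnSn _) hi hj (leqnn _).
    rewrite /in_bd eqxx !orbT => /(_ isT).
    rewrite (proj1 (Hn i (ltnW hi))) (proj1 (Hn i.+1 hi)); lia.
  + move=> i j hj hi; have := Mj i j j.+1 (leqnSn _) hj hi.
    have := I i n j j.+1 hi (leqnn _) (leqnSn _) hj.
    rewrite /in_bd eqxx !orbT => /(_ isT).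
    rewrite (proj2 (Hn j (ltnW hj))) (proj2 (Hn j.+1 hj)); lia.
- move=> hq; have [Gi Gj] := unit_step_lipschitz hq.
  have hq' := hq; case: hq' => H0 Hn _ _; split => //.
  + move=> i j hi hj; have := unit_step_upper hq hi hj; lia.
  + by move=> k hk; exists k, n; split => //; apply: (proj1 (Hn k hk)).
  + split; last exact: unit_step_boundary_2inc.
    * by move=> i i' j h1 h2 h3; case/andP: (Gi i i' j h1 h2 h3).
    * by move=> i j j' h1 h2 h3; case/andP: (Gj i j j' h1 h2 h3).
Qed.

Lemma qv_ord Q (i j : 'I_n.+1) : qv Q i j = Q (i, j).
Proof. by rewrite /qv !inord_val. Qed.

Lemma qfun_ext P Q :
  (forall i j, i <= n -> j <= n -> qv P i j = qv Q i j) -> P = Q.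
Proof.
by move=> H; apply/ffunP => -[i j]; rewrite -!qv_ord; apply: H; rewrite -ltnS.
Qed.

Lemma qleP P Q :
  (forall i j, i <= n -> j <= n -> qv P i j <= qv Q i j) -> qle P Q.
Proof. by move=> H i j; rewrite -!qv_ord; apply: H; rewrite -ltnS. Qed.

Lemma qleE P Q i j : qle P Q -> qv P i j <= qv Q i j.
Proof. by move=> H; apply: H. Qed.

Lemma qle_anti P Q : qle P Q -> qle Q P -> P = Q.
Proof.
by move=> hPQ hQP; apply/ffunP => -[i j]; apply/eqP; rewrite eqn_leq hPQ hQP.
Qed.

Definition qmin x y : qfun n := [ffun p => minn (x p) (y p)].

Lemma qv_min x y i j : qv (qmin x y) i j = minn (qv x i j) (qv y i j).
Proof. by rewrite /qv ffunE. Qed.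

Lemma qmin_unit_step x y :
  unit_step_form x -> unit_step_form y -> unit_step_form (qmin x y).
Proof.
move=> [z1 n1 i1 j1] [z2 n2 i2 j2]; split.
- move=> i hi; rewrite !qv_min; have := z1 i hi; have := z2 i hi; lia.
- move=> i hi; rewrite !qv_min; have := n1 i hi; have := n2 i hi; lia.
- move=> i j hi hj; rewrite !qv_min; have := i1 i j hi hj; have := i2 i j hi hj; lia.
- move=> i j hj hi; rewrite !qv_min; have := j1 i j hj hi; have := j2 i j hj hi; lia.
Qed.

Lemma qmin_quasi x y :
  quasi_copula x -> quasi_copula y -> quasi_copula (qmin x y).
Proof. by move=> /quasi_copulaP hx /quasi_copulaP hy; apply/quasi_copulaP/qmin_unit_step. Qed.

Lemma qmin_lel x y : qle (qmin x y) x.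
Proof. by move=> i j; rewrite ffunE geq_minl. Qed.

Lemma qmin_ler x y : qle (qmin x y) y.
Proof. by move=> i j; rewrite ffunE geq_minr. Qed.

Lemma qmin_is_meet x y :
  quasi_copula x -> quasi_copula y -> is_meet (qmin x y) x y.
Proof.
move=> hx hy; split; [exact: qmin_quasi | exact: qmin_lel | exact: qmin_ler |].
by move=> u _ h1 h2 i j; rewrite ffunE leq_min h1 h2.
Qed.

Definition elem (a b v : nat) : qfun n :=
  [ffun p : 'I_n.+1 * 'I_n.+1 =>
     minn (minn p.1 p.2) (v + (p.1 - a) + (p.2 - b))].

Lemma qv_elem a b v i j : i <= n -> j <= n ->
  qv (elem a b v) i j = minn (minn i j) (v + (i - a) + (j - b)).
Proof. by move=> hi hj; rewrite /qv ffunE /= !inordK. Qed.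

Lemma elem_quasi a b v : a <= n -> b <= n -> a + b <= v + n ->
  quasi_copula (elem a b v).
Proof.
move=> ha hb hv; apply/quasi_copulaP; split.
- move=> i hi; rewrite !qv_elem //; lia.
- move=> i hi; rewrite !qv_elem //; lia.
- move=> i j hi hj; rewrite !qv_elem //; lia.
- move=> i j hj hi; rewrite !qv_elem //; lia.
Qed.

(* Maximality: a quasi-copula with value <= v at (a,b) lies below M_{a,b,v},
   since it can grow by at most (i-a)^+ + (j-b)^+ on the way from (a,b). *)
Lemma elem_maximal u a b v : quasi_copula u -> a <= n -> b <= n ->
  qv u a b <= v -> qle u (elem a b v).
Proof.
move=> /quasi_copulaP hq ha hb hv; apply: qleP => i j hi hj; rewrite qv_elem //.
have hu := unit_step_upper hq hi hj; have [Gi Gj] := unit_step_lipschitz hq.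
have hi2 : maxn i a <= n by rewrite geq_max hi ha.
have hj2 : maxn j b <= n by rewrite geq_max hj hb.
have := Gi i (maxn i a) j (leq_maxl _ _) hi2 hj.
have := Gj (maxn i a) j (maxn j b) (leq_maxl _ _) hj2 hi2.
have := Gi a (maxn i a) (maxn j b) (leq_maxr _ _) hi2 hj2.
have := Gj a b (maxn j b) (leq_maxr _ _) hj2 ha.
lia.
Qed.

Definition qtop : qfun n := elem n 0 0.

Lemma qtop_quasi : quasi_copula qtop.
Proof. by apply: elem_quasi; rewrite ?addn0. Qed.

Lemma qle_top u : quasi_copula u -> qle u qtop.
Proof.
move=> hu; apply: elem_maximal => //.
by have [/(_ n (leqnn _)) [-> _] _ _ _] := proj1 (quasi_copulaP u) hu.
Qed.

Definition qmins (s : seq (qfun n)) : qfun n := foldr qmin qtop s.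

Lemma qmins_quasi s : {in s, forall x, quasi_copula x} -> quasi_copula (qmins s).
Proof.
elim: s => [|x s IH] hs /=; first exact: qtop_quasi.
apply: qmin_quasi; first by apply: hs; rewrite mem_head.
by apply: IH => y hy; apply: hs; rewrite in_cons hy orbT.
Qed.

Lemma qmins_le s x : x \in s -> qle (qmins s) x.
Proof.
elim: s => [|y s IH] //=; rewrite in_cons => /orP [/eqP -> | hx] i j.
- exact: qmin_lel.
- exact: leq_trans (qmin_ler _ _ _ _) (IH hx i j).
Qed.

Lemma qmins_ge u s : qle u qtop -> {in s, forall x, qle u x} -> qle u (qmins s).
Proof.
move=> htop; elim: s => [|x s IH] hs //= i j; rewrite ffunE leq_min.
rewrite hs ?mem_head //=; apply: IH => y hy; apply: hs.
by rewrite in_cons hy orbT.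
Qed.

Lemma meet_irreducible_in_qmins Q s : meet_irreducible Q ->
  {in s, forall x, quasi_copula x} -> Q = qmins s -> Q \in s.
Proof.
case=> hQ not_top irr; elim: s => [|x s IH] hs EQ.
  by case: not_top => u hu; rewrite EQ; apply: qle_top.
have hx : quasi_copula x by apply: hs; rewrite mem_head.
have hs' : {in s, forall y, quasi_copula y}.
  by move=> y hy; apply: hs; rewrite in_cons hy orbT.
have hmins := qmins_quasi hs'.
have hmeet : is_meet Q x (qmins s) by rewrite EQ; apply: qmin_is_meet.
rewrite in_cons; have [-> | Es] := irr _ _ hx hmins hmeet.
- by rewrite eqxx.
- by rewrite IH ?orbT.
Qed.

Definition elem_cover Q : seq (qfun n) :=
  [seq elem p.1 p.2 (Q p) | p : 'I_n.+1 * 'I_n.+1 <- enum [set: 'I_n.+1 * 'I_n.+1]].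

Lemma elem_cover_quasi Q : quasi_copula Q ->
  {in elem_cover Q, forall x, quasi_copula x}.
Proof.
move=> hQ _ /mapP [[a b] _ ->] /=.
apply: elem_quasi (leq_ord a) (leq_ord b) _; rewrite -qv_ord.
by apply: unit_step_lower (leq_ord a) (leq_ord b); apply/quasi_copulaP.
Qed.

Lemma qmins_elem_cover Q : quasi_copula Q -> Q = qmins (elem_cover Q).
Proof.
move=> hQ; apply: qle_anti.
- apply: qmins_ge; first exact: qle_top.
  move=> _ /mapP [[a b] _ ->].
  by apply: elem_maximal hQ (leq_ord a) (leq_ord b) _; rewrite qv_ord.
- move=> a b; have hab : elem a b (Q (a, b)) \in elem_cover Q.
    by apply/mapP; exists (a, b); rewrite ?mem_enum ?inE.
  apply: leq_trans (qmins_le hab a b) _.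
  by rewrite ffunE /= !subnn !addn0 geq_minr.
Qed.

Lemma meet_irreducible_elem Q : meet_irreducible Q ->
  exists a b, [/\ a <= n, b <= n, qv Q a b < minn a b & Q = elem a b (qv Q a b)].
Proof.
move=> hirr; have [hQ not_top _] := hirr.
have := meet_irreducible_in_qmins hirr (elem_cover_quasi hQ) (qmins_elem_cover hQ).
case/mapP=> -[a b] _ /= EQ; rewrite -qv_ord in EQ.
have ha := leq_ord a; have hb := leq_ord b.
exists a, b; split => //; rewrite ltn_neqAle unit_step_upper ?andbT //;
  last exact/quasi_copulaP.
apply/negP => /eqP hv; apply: not_top => u hu; rewrite EQ hv.
by apply: elem_maximal => //; apply: unit_step_upper => //; apply/quasi_copulaP.
Qed.

Lemma elem_meet_irreducible a b v : a <= n -> b <= n -> a + b <= v + n ->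
  v < minn a b -> meet_irreducible (elem a b v).
Proof.
move=> ha hb hv hvab; have hM := elem_quasi ha hb hv.
have Mab : qv (elem a b v) a b = v by rewrite qv_elem // !subnn !addn0; lia.
split => //.
- move=> all_le; have := qleE a b (all_le _ qtop_quasi).
  rewrite Mab qv_elem //; lia.
- move=> x y hx hy [_ Mx My glb].
  have := qleE a b (glb _ (qmin_quasi hx hy) (qmin_lel x y) (qmin_ler x y)).
  rewrite Mab qv_min geq_min => /orP [hxv | hyv].
  + by left; apply: qle_anti Mx (elem_maximal hx ha hb hxv).
  + by right; apply: qle_anti My (elem_maximal hy ha hb hyv).
Qed.

(* Every Q(w) is 2-increasing: the two rectangles at (i,j') and (i',j) meet in
   the rectangle at (i,j) and their union lies in the one at (i',j'). *)
Lemma Qw_2inc (w : 'S_n) i i' j j' : i <= i' -> i' <= n -> j <= j' -> j' <= n ->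
  qv (Qw w) i j' + qv (Qw w) i' j <= qv (Qw w) i j + qv (Qw w) i' j'.
Proof.
move=> hi hi' hj hj'.
have hin : i < n.+1 by rewrite ltnS (leq_trans hi hi').
have hjn : j < n.+1 by rewrite ltnS (leq_trans hj hj').
rewrite /qv /Qw !ffunE /= !inordK //.
set A := [set k : 'I_n | (k < i) && (w k < j')].
set B := [set k : 'I_n | (k < i') && (w k < j)].
have AIB : A :&: B = [set k : 'I_n | (k < i) && (w k < j)].
  apply/setP => k; rewrite !inE.
  case: (ltnP k i) => /=; case: (ltnP (w k) j) => /=;
  case: (ltnP (w k) j') => /=; case: (ltnP k i') => /=; lia.
have AUB : A :|: B \subset [set k : 'I_n | (k < i') && (w k < j')].
  apply/subsetP => k; rewrite !inE => /orP [] /andP [h1 h2]; apply/andP; lia.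
rewrite -cardsUI AIB addnC leq_add2l; exact: subset_leq_card AUB.
Qed.

End QuasiCopulas.

Lemma wfun_cases i1 i2 i3 i4 k :
  [\/ k <= i1 /\ wfun i1 i2 i3 i4 k = k,
      i1 < k <= i1 + i2 /\ wfun i1 i2 i3 i4 k = k + i3,
      i1 + i2 < k <= i1 + i2 + i3 /\ wfun i1 i2 i3 i4 k = k - i2 |
      i1 + i2 + i3 < k /\ wfun i1 i2 i3 i4 k = k].
Proof.
rewrite /wfun; case: ifP => h1; first by constructor 1.
case: ifP => h2; first by constructor 2; split => //; rewrite ?andbT ltnNge h1.
case: ifP => h3; first by constructor 3; split => //; rewrite ?andbT ltnNge h2.
by constructor 4; split => //; rewrite ltnNge h3.
Qed.

Lemma wfun_perm n i1 i2 i3 i4 : i1 + i2 + i3 + i4 = n ->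
  exists w : 'S_n, forall i : 'I_n, (w i).+1 = wfun i1 i2 i3 i4 i.+1.
Proof.
move=> E.
have range k : 1 <= k <= n -> 1 <= wfun i1 i2 i3 i4 k <= n.
  by case: (wfun_cases i1 i2 i3 i4 k) => -[? ->]; lia.
have inj x y : wfun i1 i2 i3 i4 x = wfun i1 i2 i3 i4 y -> x = y.
  case: (wfun_cases i1 i2 i3 i4 x) => -[? ->];
  case: (wfun_cases i1 i2 i3 i4 y) => -[? ->]; lia.
have lt_n (k : 'I_n) : (wfun i1 i2 i3 i4 k.+1).-1 < n.
  by have := range k.+1; have := ltn_ord k; lia.
have f_inj : injective (fun k : 'I_n => Ordinal (lt_n k)).
  move=> x y /(congr1 val) /= H; apply/val_inj => /=; apply/eq_add_S/inj.
  by have := range x.+1; have := range y.+1; have := ltn_ord x; have := ltn_ord y; lia.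
exists (perm f_inj) => i; rewrite permE /=.
by have := range i.+1; have := ltn_ord i; lia.
Qed.

(* Counting M_{i1+i2, i1+i3, i1} row by row: passing from row r to row r+1
   adds exactly the point (r+1, w(r+1)) when w(r+1) <= s. *)
Lemma elem_row_step n i1 i2 i3 i4 r s :
  i1 + i2 + i3 + i4 = n -> 1 <= i2 -> 1 <= i3 -> r < n -> s <= n ->
  minn (minn r.+1 s) (i1 + (r.+1 - (i1 + i2)) + (s - (i1 + i3))) =
  minn (minn r s) (i1 + (r - (i1 + i2)) + (s - (i1 + i3))) +
  (if wfun i1 i2 i3 i4 r.+1 <= s then 1 else 0).
Proof.
move=> E h2 h3 hr hs.
have [hw|hw] := leqP (wfun i1 i2 i3 i4 r.+1) s;
  by case: (wfun_cases i1 i2 i3 i4 r.+1) => -[? ?]; lia.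
Qed.

Lemma Qw_wfun_elem n (w : 'S_n) i1 i2 i3 i4 :
  i1 + i2 + i3 + i4 = n -> 1 <= i2 -> 1 <= i3 ->
  (forall i : 'I_n, (w i).+1 = wfun i1 i2 i3 i4 i.+1) ->
  Qw w = elem n (i1 + i2) (i1 + i3) i1.
Proof.
move=> E h2 h3 Hw; apply: qfun_ext => r s hr hs; rewrite qv_elem //.
rewrite /qv /Qw ffunE /= !inordK ?ltnS // -sum1dep_card big_mkcond /=.
under eq_bigr => k _ do rewrite Hw.
rewrite -(big_mkord xpredT
  (fun k => if (k < r) && (wfun i1 i2 i3 i4 k.+1 <= s) then 1 else 0)).
rewrite (@big_cat_nat _ _ _ r 0 n) //= [X in _ + X]big1_seq ?addn0; last first.
  by move=> k /andP [_]; rewrite mem_iota => /andP [hk _]; rewrite ltnNge hk.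
rewrite (eq_big_nat _ _ (F2 := fun k => if wfun i1 i2 i3 i4 k.+1 <= s then 1 else 0));
  last by move=> k /andP [_ ->].
elim: r hr => [|r IH] hr; first by rewrite big_geq //; lia.
by rewrite big_nat_recr //= IH ?(ltnW hr) // (elem_row_step E h2 h3 hr hs).
Qed.

Theorem mainTheorem5 (n : nat) (Q : qfun n) :
  1 <= n -> quasi_copula Q ->
  (meet_irreducible Q <->
   copula Q /\
   exists (w : 'S_n) (i1 i2 i3 i4 : nat),
     [/\ 1 <= i2, 1 <= i3, i1 + i2 + i3 + i4 = n,
         (forall i : 'I_n, (w i).+1 = wfun i1 i2 i3 i4 i.+1) &
         Q = Qw w]).
Proof.
move=> _ hQ; split.
- move=> hirr; have [a [b [ha hb hv EQ]]] := meet_irreducible_elem hirr.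
  have hlo : a + b <= qv Q a b + n.
    by apply: unit_step_lower ha hb; apply/quasi_copulaP.
  set v := qv Q a b in hv hlo EQ.
  have E : v + (a - v) + (b - v) + (n + v - a - b) = n by lia.
  have [w Hw] := wfun_perm E.
  have QE : Q = Qw w.
    by rewrite (Qw_wfun_elem E _ _ Hw) ?EQ ?subnKC //; lia.
  split; first by split=> // i i' j j'; rewrite QE; apply: Qw_2inc.
  by exists w, v, (a - v), (b - v), (n + v - a - b); split => //; lia.
- case=> _ [w [i1 [i2 [i3 [i4 [h2 h3 E Hw ->]]]]]].
  rewrite (Qw_wfun_elem E h2 h3 Hw).
  by apply: elem_meet_irreducible; lia.
Qed.
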